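(* Let $\mathcal{P}_1,\dots,\mathcal{P}_k$ be finite posets. If $\mathbf{T}\in\mathcal{C}(\times_{j=1}^k\mathcal{P}_j)$ is a rank-one tensor, then $\mathbf{T}$ has ND rank one.
   Context: For a finite poset $\mathcal{Q}$, the order cone $\mathcal{C}(\mathcal{Q})$ is the set of $\mathbf{f}\in\mathbb{R}^{\mathcal{Q}}$ with $f_x\ge0$ for all $x$ and $f_x\le f_y$ whenever $x\preceq y$. The product poset $\times_j\mathcal{P}_j$ is ordered componentwise, so $\mathcal{C}(\times_j\mathcal{P}_j)$ consists of nonnegative tensors that are nondecreasing in the product order. A rank-one tensor is a nonzero tensor of the form $\otimes_{j=1}^k\mathbf{v}^{(j)}$ with real vectors $\mathbf{v}^{(j)}\in\mathbb{R}^{\mathcal{P}_j}$. The ND rank is the minimal $r$ with $\mathbf{T}=\sum_{i=1}^r\otimes_j\mathbf{v}^{(ij)}$, $\mathbf{v}^{(ij)}\in\mathcal{C}(\mathcal{P}_j)$. *)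

From HB Require Import structures.
From mathcomp Require Import all_boot all_order all_algebra.
From mathcomp Require Import reals.
Set Implicit Arguments. Unset Strict Implicit. Unset Printing Implicit Defensive.
Import Order.TTheory GRing.Theory Num.Theory.
Local Open Scope ring_scope.

Definition is_partial_order (Q : finType) (le : rel Q) : Prop :=
  [/\ reflexive le, antisymmetric le & transitive le].

Definition order_cone (R : realType) (Q : Type) (le : rel Q) (f : Q -> R) : Prop :=
  (forall x, 0 <= f x) /\ (forall x y, le x y -> f x <= f y).

Definition prod_le (k : nat) (P : 'I_k -> finType) (le : forall j, rel (P j))
  (x y : forall j, P j) : bool := [forall j, le j (x j) (y j)].

Definition tensor_prod (R : realType) (k : nat) (P : 'I_k -> finType)
  (v : forall j, P j -> R) : (forall j, P j) -> R :=
  fun x => \prod_(j < k) v j (x j).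

Definition rank_one (R : realType) (k : nat) (P : 'I_k -> finType)
  (T : (forall j, P j) -> R) : Prop :=
  (exists x, T x != 0) /\
  exists v : forall j, P j -> R, forall x, T x = tensor_prod v x.

Definition nd_decomposable (R : realType) (k : nat) (P : 'I_k -> finType)
  (le : forall j, rel (P j)) (r : nat) (T : (forall j, P j) -> R) : Prop :=
  exists w : 'I_r -> forall j, P j -> R,
    (forall i j, order_cone (le j) (w i j)) /\
    forall x, T x = \sum_(i < r) tensor_prod (w i) x.

Definition nd_rank_is (R : realType) (k : nat) (P : 'I_k -> finType)
  (le : forall j, rel (P j)) (T : (forall j, P j) -> R) (r : nat) : Prop :=
  nd_decomposable le r T /\ forall r', (r' < r)%N -> ~ nd_decomposable le r' T.

(* Fix a point x0 with T x0 > 0 and write T = v_1 (x) ... (x) v_k. Replacing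
   each v_j by sg(v_j(x0_j)) v_j does not change T, since the signs multiply to
   sg(T x0) = 1, and turns v_j into a positive multiple of the fiber
   y |-> T(x0 with j-th coordinate y), which lies in the order cone of P_j. *)
From HB Require Import structures.
From mathcomp Require Import all_boot all_order all_algebra.
From mathcomp Require Import reals.
Local Open Scope ring_scope.
Import Order.TTheory GRing.Theory Num.Theory.

Lemma order_cone_scale (R : realType) (Q : Type) (le : rel Q) (f g : Q -> R)
  (a : R) : 0 <= a -> (forall y, g y = a * f y) ->
  order_cone le f -> order_cone le g.
Proof.
move=> a_ge0 gE [f_ge0 f_mono]; split=> [y|y y' le_yy'].
  by rewrite gE mulr_ge0.
by rewrite !gE ler_wpM2l // f_mono.
Qed.

Section ProductPoset.
Variables (k : nat) (P : 'I_k -> finType) (le : forall j, rel (P j)).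

Lemma prod_le_dfwith (x : forall j, P j) (j : 'I_k) (y y' : P j) :
  (forall i, reflexive (le i)) -> le j y y' ->
  prod_le le (dfwith x y) (dfwith x y').
Proof.
move=> le_refl le_yy'; apply/forallP => i.
have [<-|ne_ji] := eqVneq j i; first by rewrite !dfwith_in.
by rewrite !dfwith_out // le_refl.
Qed.

Lemma order_cone_fiber (R : realType) (T : (forall j, P j) -> R)
  (x : forall j, P j) (j : 'I_k) :
  (forall i, reflexive (le i)) -> order_cone (prod_le le) T ->
  order_cone (le j) (fun y => T (dfwith x y)).
Proof.
move=> le_refl [T_ge0 T_mono]; split=> // y y' le_yy'.
by apply: T_mono; apply: prod_le_dfwith.
Qed.

Lemma tensor_prod_dfwith (R : realType) (v : forall j, P j -> R)
  (x : forall j, P j) (j : 'I_k) (y : P j) :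
  tensor_prod v (dfwith x y) = v j y * \prod_(i | i != j) v i (x i).
Proof.
rewrite /tensor_prod (bigD1 j) //= dfwith_in; congr (_ * _).
by apply: eq_bigr => i ne_ij; rewrite dfwith_out // eq_sym.
Qed.

Lemma nd_decomposable0 (R : realType) (T : (forall j, P j) -> R) :
  (exists x, T x != 0) -> ~ nd_decomposable le 0 T.
Proof. by move=> [x Tx_neq0] [w [_ TE]]; move: Tx_neq0; rewrite TE big_ord0 eqxx. Qed.

Lemma rank_one_nd_decomposable (R : realType) (T : (forall j, P j) -> R) :
  (forall i, reflexive (le i)) -> order_cone (prod_le le) T ->
  rank_one T -> nd_decomposable le 1 T.
Proof.
move=> le_refl T_cone [[x0 Tx0_neq0] [v TE]].
have Tx0_gt0 : 0 < T x0 by rewrite lt_def Tx0_neq0 (proj1 T_cone).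
pose c j := v j (x0 j).
pose rest j := \prod_(i | i != j) c i.
have Tx0E j : T x0 = c j * rest j by rewrite TE /tensor_prod (bigD1 j).
have rest_neq0 j : rest j != 0.
  by apply: contraNneq Tx0_neq0 => rest0; rewrite (Tx0E j) rest0 mulr0.
pose w (_ : 'I_1) j y := Num.sg (c j) * v j y.
exists w; split=> [i j|x].
  apply: (order_cone_scale _ _ _ (fun y => T (dfwith x0 y)) _ `|rest j|^-1).
  - by rewrite invr_ge0.
  - have norm_rest_neq0 : `|rest j| != 0 by rewrite normr_eq0.
    move=> y; rewrite -(mulKf norm_rest_neq0 (w i j y)); congr (_ * _).
    rewrite TE tensor_prod_dfwith -/(rest j) normrEsg mulrACA -sgrM.
    by rewrite [rest j * _]mulrC -Tx0E gtr0_sg // mul1r mulrC.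
  - exact: order_cone_fiber.
have sg_prod : \prod_j Num.sg (c j) = Num.sg (T x0).
  by rewrite TE /tensor_prod (big_morph _ (@sgrM R) (sgr1 R)).
by rewrite big_ord1 /tensor_prod big_split /= sg_prod gtr0_sg // mul1r TE.
Qed.

End ProductPoset.

Theorem theorem11 (R : realType) (k : nat) (P : 'I_k -> finType)
  (le : forall j, rel (P j)) (Hpo : forall j, is_partial_order (le j))
  (T : (forall j, P j) -> R) :
  order_cone (prod_le le) T -> rank_one T -> nd_rank_is le T 1%N.
Proof.
move=> T_cone T_rank1.
have le_refl i : reflexive (le i) by have [] := Hpo i.
split; first exact: rank_one_nd_decomposable.
move=> r; rewrite ltnS leqn0 => /eqP ->.
exact: nd_decomposable0 (proj1 T_rank1).
Qed.
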